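(* Let $r:\mathcal V\to\mathbb P(\mathcal L)$ be a discrete Ribaucour sphere congruence and $u$ a totally umbilic envelope of $r$ with point sphere map $u^p$. Then for every face $(ijkl)$ the face cross-ratios coincide: $\mathrm{cr}(r_i,r_j,r_k,r_l)=\mathrm{cr}(u^p_i,u^p_j,u^p_k,u^p_l)$. In particular, $u^p$ is isothermic if and only if $r$ is isothermic.
   Context: $\mathbb{R}^{4,2}$ is $\mathbb R^6$ with a symmetric bilinear form $\langle\cdot,\cdot\rangle$ of signature $(4,2)$, $\mathcal L$ its light cone, $\mathbb P(\mathcal L)$ the set of oriented spheres; black letters denote homogeneous coordinates. A point sphere complex $\mathfrak p$, $\langle\mathfrak p,\mathfrak p\rangle=-1$, is fixed; point spheres are spheres orthogonal to $\mathfrak p$; each contact element (2-dim totally null subspace) contains exactly one point sphere. $\mathcal V$ is the vertex set of a simply connected subset of $\mathbb Z^2$; faces $(ijkl)$ are listed in cyclic order. A discrete Legendre map is a map $f$ from $\mathcal V$ to contact elements with adjacent contact elements sharing a sphere (its curvature sphere on that edge); it envelops a sphere congruence $r$ if $r_i\in f_i$. A discrete Legendre map is totally umbilic if all its curvature spheres coincide (a constant sphere $n$) and its point sphere map is a circular net for any choice of point sphere complex; a totally umbilic envelope of $r$ then has the form $u_i=\langle\!\langle\mathfrak n,\mathfrak r_i\rangle\!\rangle$. A discrete Ribaucour sphere congruence is a non-degenerate discrete conjugate net $r:\mathcal V\to\mathbb P(\mathcal L)$ (the coordinates of the four spheres of each face span a 3-dim subspace of signature $(2,1)$ or $(1,2)$).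 The cross-ratio of four spheres or point spheres is $\mathrm{cr}(s_1,s_2,s_3,s_4)=\frac{\langle\mathfrak s_1,\mathfrak s_2\rangle\langle\mathfrak s_3,\mathfrak s_4\rangle}{\langle\mathfrak s_2,\mathfrak s_3\rangle\langle\mathfrak s_4,\mathfrak s_1\rangle}$. A map $x:\mathcal V\to\mathbb P(\mathcal L)$ with planar faces is isothermic if there is a function $a$ on edges, taking equal values on opposite edges of every face, such that $\mathrm{cr}(x_i,x_j,x_k,x_l)=a_{ij}/a_{jk}$ on every face $(ijkl)$. *)

From mathcomp Require Import all_boot all_order all_algebra.
Set Implicit Arguments. Unset Strict Implicit. Unset Printing Implicit Defensive.
Import Order.TTheory GRing.Theory Num.Theory.
Local Open Scope ring_scope.

(* R^{4,2}: row vectors of length 6 with the form diag(1,1,1,1,-1,-1). *)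
Definition lie {R : realFieldType} (x y : 'rV[R]_6) : R :=
  \sum_(i < 6) (if (i < 4)%N then 1 else -1) * x 0 i * y 0 i.

(* homogeneous coordinates of a point of P(L) *)
Definition in_light_cone {R : realFieldType} (x : 'rV[R]_6) : Prop :=
  x != 0 /\ lie x x = 0.

Definition cr {R : realFieldType} (s1 s2 s3 s4 : 'rV[R]_6) : R :=
  lie s1 s2 * lie s3 s4 / (lie s2 s3 * lie s4 s1).

(* Vertices: points of Z^2; V is the vertex set (a subset of Z^2). *)
Definition vtx := (int * int)%type.
Definition sh1 (v : vtx) : vtx := (v.1 + 1, v.2).
Definition sh2 (v : vtx) : vtx := (v.1, v.2 + 1).

(* v = (m,n) is the corner of the face (ijkl) with
   i = (m,n), j = (m+1,n), k = (m+1,n+1), l = (m,n+1) (cyclic order). *)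
Definition is_face (V : vtx -> Prop) (v : vtx) : Prop :=
  V v /\ V (sh1 v) /\ V (sh1 (sh2 v)) /\ V (sh2 v).

Definition is_edge (V : vtx -> Prop) (v w : vtx) : Prop :=
  V v /\ V w /\ (w = sh1 v \/ w = sh2 v).

Definition face_mx {R : realFieldType} (x : vtx -> 'rV[R]_6) (v : vtx) :=
  col_mx (col_mx (x v) (x (sh1 v))) (col_mx (x (sh1 (sh2 v))) (x (sh2 v))).

(* discrete conjugate net: the four coordinate vectors of each face span
   a subspace of dimension at most 3 *)
Definition conjugate_net {R : realFieldType} (V : vtx -> Prop)
  (x : vtx -> 'rV[R]_6) : Prop :=
  forall v, is_face V v -> (\rank (face_mx x v) <= 3)%N.

Definition gram {R : realFieldType} (B : 'M[R]_(3,6)) : 'M[R]_3 :=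
  \matrix_(a < 3, b < 3) lie (row a B) (row b B).

Definition diag21 {R : realFieldType} : 'M[R]_3 :=
  \matrix_(a < 3, b < 3) (if a == b then (if (a == 2 :> nat) then -1 else 1) else 0).
Definition diag12 {R : realFieldType} : 'M[R]_3 :=
  \matrix_(a < 3, b < 3) (if a == b then (if (a == 0 :> nat) then 1 else -1) else 0).

(* the row space of M is 3-dimensional of signature (2,1) or (1,2):
   it has a basis B with Gram matrix diag(1,1,-1) or diag(1,-1,-1) *)
Definition span_sig_21_or_12 {R : realFieldType} {m : nat} (M : 'M[R]_(m,6)) : Prop :=
  exists B : 'M[R]_(3,6), (B == M)%MS /\ (gram B = diag21 \/ gram B = diag12).

(* discrete Ribaucour sphere congruence: non-degenerate discrete conjugate net
   r : V -> P(L) *)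
Definition ribaucour {R : realFieldType} (V : vtx -> Prop) (r : vtx -> 'rV[R]_6) : Prop :=
  (forall v, V v -> in_light_cone (r v)) /\
  conjugate_net V r /\
  (forall v, is_face V v -> span_sig_21_or_12 (face_mx r v)).

(* contact element: a 2-dim totally null subspace, given by a 2 x 6 basis matrix *)
Definition contact_elem {R : realFieldType} (U : 'M[R]_(2,6)) : Prop :=
  \rank U = 2%N /\ (forall a b : 'I_2, lie (row a U) (row b U) = 0).

Definition legendre {R : realFieldType} (V : vtx -> Prop) (f : vtx -> 'M[R]_(2,6)) : Prop :=
  (forall v, V v -> contact_elem (f v)) /\
  (forall v w, is_edge V v w ->
     exists s : 'rV[R]_6, s != 0 /\ (s <= f v)%MS /\ (s <= f w)%MS).

Definition envelops {R : realFieldType} (V : vtx -> Prop) (f : vtx -> 'M[R]_(2,6))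
  (r : vtx -> 'rV[R]_6) : Prop :=
  forall v, V v -> (r v <= f v)%MS.

(* x is (homogeneous coordinates of) the point sphere map of f w.r.t. the
   point sphere complex q: x_v is the point sphere (sphere orthogonal to q)
   contained in f_v *)
Definition point_sphere_map {R : realFieldType} (V : vtx -> Prop) (q : 'rV[R]_6)
  (f : vtx -> 'M[R]_(2,6)) (x : vtx -> 'rV[R]_6) : Prop :=
  forall v, V v -> x v != 0 /\ (x v <= f v)%MS /\ lie (x v) q = 0.

(* circular net of point spheres: the four point spheres of each face
   lie on a circle, i.e. span a subspace of dimension <= 3 *)
Definition circular_net {R : realFieldType} (V : vtx -> Prop) (x : vtx -> 'rV[R]_6) : Prop :=
  conjugate_net V x.

(* totally umbilic discrete Legendre map: all curvature spheres coincide with a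
   constant sphere n, and the point sphere map is a circular net for every
   choice of point sphere complex *)
Definition totally_umbilic {R : realFieldType} (V : vtx -> Prop) (f : vtx -> 'M[R]_(2,6)) : Prop :=
  legendre V f /\
  (exists n : 'rV[R]_6, n != 0 /\
     forall v w, is_edge V v w -> (n <= f v)%MS /\ (n <= f w)%MS) /\
  (forall (q : 'rV[R]_6) (x : vtx -> 'rV[R]_6),
     lie q q = -1 -> point_sphere_map V q f x -> circular_net V x).

Definition face_cr {R : realFieldType} (x : vtx -> 'rV[R]_6) (v : vtx) : R :=
  cr (x v) (x (sh1 v)) (x (sh1 (sh2 v))) (x (sh2 v)).

(* isothermic: planar faces and an edge function a (a1 on edges (v, sh1 v),
   a2 on edges (v, sh2 v)) equal on opposite edges with
   cr(x_i,x_j,x_k,x_l) = a_ij / a_jk *)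
Definition isothermic {R : realFieldType} (V : vtx -> Prop) (x : vtx -> 'rV[R]_6) : Prop :=
  (forall v, V v -> in_light_cone (x v)) /\
  conjugate_net V x /\
  exists a1 a2 : vtx -> R,
    forall v, is_face V v ->
      a1 v = a1 (sh2 v) /\ a2 v = a2 (sh1 v) /\
      face_cr x v = a1 v / a2 (sh1 v).

From mathcomp Require Import all_boot all_order all_algebra ring lra.
Import GRing.Theory Num.Theory.
Local Open Scope ring_scope.

(* Fix a face and let n be the constant curvature sphere of
   the totally umbilic envelope u.  At each vertex the contact element u_v is
   a totally null plane containing n, r_v and the point sphere up_v, so n is
   orthogonal to every r_v, hence to the span of the face of r.  This span is
   non-degenerate (signature (2,1) or (1,2)), so no r_v is a multiple of n and
   u_v is spanned by n and r_v:  up_v = a_v n + b_v r_v.  If <n,p> = 0, then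
   every up_v lies on the line of n: otherwise n and r_v would be two
   independent orthogonal null vectors in p^perp, which has signature (4,1).
   This contradicts the rank hypothesis on the face of up, so <n,p> <> 0, and
   then <up_v,p> = 0 forces b_v <> 0.  Since n is null and orthogonal to all
   r_v, <up_v,up_w> = b_v b_w <r_v,r_w>, and the factors b_v cancel in the
   cross-ratio.  Equality of face cross-ratios transports isothermicity. *)

Section LieForm.
Set Implicit Arguments. Unset Strict Implicit.
Variable R : realFieldType.
Implicit Types x y z : 'rV[R]_6.

Lemma mx11_mulmx (c : 'M[R]_1) x : c *m x = c 0 0 *: x.
Proof. by rewrite {1}[c]mx11_scalar mul_scalar_mx. Qed.

Lemma lieC x y : lie x y = lie y x.
Proof. by apply: eq_bigr => i _; rewrite mulrAC. Qed.

Lemma lieDl x y z : lie (x + y) z = lie x z + lie y z.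
Proof.
rewrite /lie -big_split /=; apply: eq_bigr => i _; rewrite !mxE.
by rewrite mulrDr mulrDl.
Qed.

Lemma lieZl a x z : lie (a *: x) z = a * lie x z.
Proof.
rewrite /lie mulr_sumr; apply: eq_bigr => i _; rewrite !mxE.
by rewrite mulrCA !mulrA.
Qed.

Lemma lieDr x y z : lie z (x + y) = lie z x + lie z y.
Proof. by rewrite lieC lieDl !(lieC z). Qed.

Lemma lieZr a x z : lie z (a *: x) = a * lie z x.
Proof. by rewrite lieC lieZl lieC. Qed.

Lemma lieNl x z : lie (- x) z = - lie x z.
Proof. by rewrite -scaleN1r lieZl mulN1r. Qed.

Lemma lieNr x z : lie z (- x) = - lie z x.
Proof. by rewrite lieC lieNl lieC. Qed.

Lemma lie0l z : lie 0 z = 0.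
Proof. by rewrite -(scale0r (0 : 'rV[R]_6)) lieZl mul0r. Qed.

Lemma lie_suml (I : finType) (F : I -> 'rV[R]_6) z :
  lie (\sum_i F i) z = \sum_i lie (F i) z.
Proof. exact: (big_morph (fun a => lie a z) (fun a b => lieDl a b z) (lie0l z)). Qed.

Lemma lie_sumr (I : finType) (F : I -> 'rV[R]_6) z :
  lie z (\sum_i F i) = \sum_i lie z (F i).
Proof. by rewrite lieC lie_suml; apply: eq_bigr => i _; rewrite lieC. Qed.

Lemma lie_totally_null m (U : 'M[R]_(m,6)) x y :
  (forall i j, lie (row i U) (row j U) = 0) ->
  (x <= U)%MS -> (y <= U)%MS -> lie x y = 0.
Proof.
move=> U0 /submxP [a ->] /submxP [b ->].
rewrite !mulmx_sum_row lie_suml big1 // => i _.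
by rewrite lie_sumr big1 // => j _; rewrite lieZl lieZr U0 !mulr0.
Qed.

Definition orth x {m} (M : 'M[R]_(m,6)) : Prop :=
  forall y, (y <= M)%MS -> lie x y = 0.

Lemma orth_row x y : lie x y = 0 -> orth x y.
Proof. by move=> xy z /submxP [c ->]; rewrite mx11_mulmx lieZr xy mulr0. Qed.

Lemma orth_col x m1 m2 (A : 'M[R]_(m1,6)) (B : 'M[R]_(m2,6)) :
  orth x A -> orth x B -> orth x (col_mx A B).
Proof.
move=> xA xB y; rewrite -addsmxE => /sub_addsmxP [[a b] /= ->].
by rewrite lieDr xA ?xB ?addr0 // submxMl.
Qed.

Lemma sig_nondegenerate m (M : 'M[R]_(m,6)) x :
  span_sig_21_or_12 M -> (x <= M)%MS -> orth x M -> x = 0.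
Proof.
case=> B [/andP [BM MB] gramB] xM xorth.
have /submxP [c xE] : (x <= B)%MS by apply: submx_trans MB.
subst x.
suff -> : c = 0 by rewrite mul0mx.
apply/rowP => b; rewrite mxE.
have gramE a : lie (row a B) (row b B) = gram B a b by rewrite mxE.
have : lie (c *m B) (row b B) = 0 by apply: xorth; apply: submx_trans (row_sub b B) BM.
rewrite mulmx_sum_row lie_suml (bigD1 b) //= big1 ?addr0 => [|a /negPf ab].
  rewrite lieZl gramE.
  by case: gramB => ->; rewrite mxE eqxx; case: ifP => _ /eqP;
     rewrite ?mulrN1 ?mulr1 ?oppr_eq0 => /eqP.
by rewrite lieZl gramE; case: gramB => ->; rewrite mxE ab mulr0.
Qed.

Lemma orth_nondegenerate_notsub m (M : 'M[R]_(m,6)) (r n : 'rV[R]_6) :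
  span_sig_21_or_12 M -> r != 0 -> (r <= M)%MS -> orth n M -> ~~ (r <= n)%MS.
Proof.
move=> sigM r0 rM nM; apply: contra r0 => /submxP [c rE].
apply/eqP; apply: (sig_nondegenerate sigM rM) => y yM.
by rewrite rE mx11_mulmx lieZl nM ?mulr0.
Qed.

(* [ent x k]: the k-th coordinate of x; coordinates 0..3 are spacelike,
   coordinates 4 and 5 timelike. *)
Definition ent x (k : nat) : R := x 0 (inord k).

Lemma sum_ord6 (F : 'I_6 -> R) : \sum_(i < 6) F i =
  F (inord 0) + F (inord 1) + F (inord 2) + F (inord 3) + F (inord 4) + F (inord 5).
Proof.
rewrite !big_ord_recl big_ord0 addr0 !addrA.
by repeat congr (_ + _); congr F; apply/val_inj; rewrite /= inordK.
Qed.

Lemma lie_coord x y : lie x y =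
  ent x 0 * ent y 0 + ent x 1 * ent y 1 + ent x 2 * ent y 2 + ent x 3 * ent y 3
  - ent x 4 * ent y 4 - ent x 5 * ent y 5.
Proof. by rewrite /lie sum_ord6 !inordK //= /ent; ring. Qed.

Lemma ent_eq0 z : (forall k, (k < 6)%N -> ent z k = 0) -> z = 0.
Proof. by move=> z0; apply/rowP => j; rewrite mxE -[j]inord_val; apply: z0. Qed.

Section TimelikeUnit.
Variable p : 'rV[R]_6.
Hypothesis pp : lie p p = -1.

(* Writing that timelike part as t
   times the one of p, the vector z - t p is spacelike-only, so its square is
   a sum of four squares; bilinearity shows this square equals -t^2. *)
Lemma null_orth_timelike_eq0 z : lie z z = 0 -> lie z p = 0 ->
  ent z 4 * ent p 5 = ent z 5 * ent p 4 -> z = 0.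
Proof.
move=> zz zp par.
have p45 : ent p 4 ^+ 2 + ent p 5 ^+ 2 != 0.
  rewrite lt0r_neq0 //; move: pp; rewrite lie_coord; nra.
pose t := (ent z 4 * ent p 4 + ent z 5 * ent p 5) / (ent p 4 ^+ 2 + ent p 5 ^+ 2).
have z4 : ent z 4 = t * ent p 4.
  apply: (mulIf p45); rewrite /t mulrAC divfK //.
  by transitivity (ent z 4 * ent p 4 ^+ 2 + ent z 4 * ent p 5 * ent p 5);
    [ring | rewrite par; ring].
have z5 : ent z 5 = t * ent p 5.
  apply: (mulIf p45); rewrite /t mulrAC divfK //.
  by transitivity (ent z 5 * ent p 4 * ent p 4 + ent z 5 * ent p 5 ^+ 2);
    [ring | rewrite -par; ring].
pose w := z + (- t) *: p.
have went k : ent w k = ent z k - t * ent p k by rewrite /ent !mxE mulNr.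
have sq : (ent z 0 - t * ent p 0) ^+ 2 + (ent z 1 - t * ent p 1) ^+ 2
  + (ent z 2 - t * ent p 2) ^+ 2 + (ent z 3 - t * ent p 3) ^+ 2 + t ^+ 2 = 0.
  have ww : lie w w = - t ^+ 2.
    by rewrite !(lieDl, lieDr, lieZl, lieZr) zz zp (lieC p z) zp pp; ring.
  move: ww; rewrite lie_coord !went -z4 -z5 !subrr => ww.
  by rewrite -[t ^+ 2]opprK -ww; ring.
move/eqP: sq; rewrite !paddr_eq0 ?addr_ge0 ?sqr_ge0 // !sqrf_eq0 !subr_eq0.
case/andP=> /andP [/andP [/andP [/eqP z0 /eqP z1] /eqP z2] /eqP z3] /eqP t0.
apply: ent_eq0 => -[|[|[|[|[|[|k]]]]]] //= _;
  by rewrite ?z0 ?z1 ?z2 ?z3 ?z4 ?z5 t0 mul0r.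
Qed.

(* The orthogonal complement of p has signature (4,1), so it contains no
   totally null plane: two orthogonal null vectors in it are proportional. *)
Lemma null_pair_dependent x y : x != 0 ->
  lie x x = 0 -> lie y y = 0 -> lie x y = 0 -> lie x p = 0 -> lie y p = 0 ->
  (y <= x)%MS.
Proof.
move=> x0 xx yy xy xp yp.
pose d a := ent a 4 * ent p 5 - ent a 5 * ent p 4.
have dx0 : d x != 0.
  apply: contra x0 => /eqP dx; apply/eqP/null_orth_timelike_eq0 => //.
  by apply/eqP; rewrite -subr_eq0; apply/eqP.
have z0 : d y *: x - d x *: y = 0.
  apply: null_orth_timelike_eq0.
  - by rewrite !(lieDl, lieDr, lieZl, lieZr, lieNl, lieNr) (lieC y x) xx yy xy; ring.
  - by rewrite !(lieDl, lieZl, lieNl) xp yp; ring.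
  - by rewrite /d /ent !mxE; ring.
have -> : y = (d y / d x) *: x.
  apply: (scalerI dx0); rewrite scalerA mulrCA divff ?mulr1 //.
  by apply/esym/subr0_eq.
by rewrite scalemx_sub.
Qed.
End TimelikeUnit.

Lemma plane_span m (U : 'M[R]_(m,6)) n r x : \rank U = 2%N ->
  (n <= U)%MS -> (r <= U)%MS -> (x <= U)%MS -> n != 0 -> ~~ (r <= n)%MS ->
  exists a b, x = a *: n + b *: r.
Proof.
move=> rkU nU rU xU n0 rn.
have rk_nr : (1 < \rank (n + r)%MS)%N.
  have rk_n : \rank n = 1%N by rewrite rank_rV n0.
  rewrite -[X in (X < _)%N]rk_n (ltn_leqif (mxrank_leqif_sup (addsmxSl n r))).
  by rewrite addsmx_sub submx_refl.
have UE : (U <= n + r)%MS.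
  by rewrite -(geq_leqif (mxrank_leqif_sup _)) ?addsmx_sub ?nU // rkU.
have /sub_addsmxP [[a b] /= ->] := submx_trans xU UE.
by exists (a 0 0), (b 0 0); rewrite !mx11_mulmx.
Qed.

(* The configuration at one vertex: the contact element U contains the
   curvature sphere n, the enveloped sphere r <> 0 and the point sphere
   x <> 0, which is orthogonal to the point sphere complex p. *)
Record umbilic_vertex (U : 'M[R]_(2,6)) (n p r x : 'rV[R]_6) : Prop := {
  uv_contact : contact_elem U;
  uv_n : (n <= U)%MS;
  uv_r : (r <= U)%MS;
  uv_x : (x <= U)%MS;
  uv_r0 : r != 0;
  uv_x0 : x != 0;
  uv_xp : lie x p = 0 }.

Section Vertex.
Variables (U : 'M[R]_(2,6)) (n p r x : 'rV[R]_6).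
Hypotheses (UV : umbilic_vertex U n p r x) (n0 : n != 0) (rn : ~~ (r <= n)%MS).

Let null a b : (a <= U)%MS -> (b <= U)%MS -> lie a b = 0.
Proof. by apply: lie_totally_null; case: (uv_contact UV). Qed.

Lemma vertex_span : exists a b, x = a *: n + b *: r.
Proof.
by apply: plane_span (uv_n UV) (uv_r UV) (uv_x UV) n0 rn; case: (uv_contact UV).
Qed.

Lemma vertex_on_curvature_sphere : lie p p = -1 -> lie n p = 0 -> (x <= n)%MS.
Proof.
move=> pp np; have [a [b xE]] := vertex_span.
have [b0 | b0] := eqVneq b 0; first by rewrite xE b0 scale0r addr0 scalemx_sub.
have rp : lie r p = 0.
  have := uv_xp UV; rewrite xE lieDl !lieZl np mulr0 add0r => /eqP.
  by rewrite mulf_eq0 (negPf b0) => /eqP.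
have := null_pair_dependent pp n0 (null (uv_n UV) (uv_n UV)) (null (uv_r UV) (uv_r UV))
  (null (uv_n UV) (uv_r UV)) np rp.
by rewrite (negPf rn).
Qed.

Lemma vertex_span_nondeg : lie n p != 0 -> exists a b, b != 0 /\ x = a *: n + b *: r.
Proof.
move=> np; have [a [b xE]] := vertex_span; exists a, b; split=> //.
apply: contra (uv_x0 UV) => /eqP b0.
have := uv_xp UV; rewrite xE b0 scale0r addr0 lieZl => /eqP.
by rewrite mulf_eq0 (negPf np) orbF => /eqP a0; rewrite a0 scale0r.
Qed.

End Vertex.

Lemma lie_shift n r r' (a b a' b' : R) :
  lie n n = 0 -> lie n r = 0 -> lie n r' = 0 ->
  lie (a *: n + b *: r) (a' *: n + b' *: r') = lie (b *: r) (b' *: r').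
Proof.
move=> nn nr nr'.
by rewrite !(lieDl, lieDr, lieZl, lieZr) nn nr' (lieC r n) nr; ring.
Qed.

Lemma cr_scale (b0 b1 b2 b3 : R) s0 s1 s2 s3 :
  b0 != 0 -> b1 != 0 -> b2 != 0 -> b3 != 0 ->
  cr (b0 *: s0) (b1 *: s1) (b2 *: s2) (b3 *: s3) = cr s0 s1 s2 s3.
Proof.
move=> h0 h1 h2 h3; rewrite /cr !(lieZl, lieZr).
set c := b0 * b1 * b2 * b3.
have c0 : c != 0 by rewrite !mulf_neq0.
have -> : b0 * (b1 * lie s0 s1) * (b2 * (b3 * lie s2 s3)) = c * (lie s0 s1 * lie s2 s3).
  by rewrite /c; ring.
have -> : b1 * (b2 * lie s1 s2) * (b3 * (b0 * lie s3 s0)) = c * (lie s1 s2 * lie s3 s0).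
  by rewrite /c; ring.
by rewrite invfM mulrACA divff // mul1r.
Qed.

Definition face_corner (v w : vtx) : Prop :=
  w = v \/ w = sh1 v \/ w = sh1 (sh2 v) \/ w = sh2 v.

Lemma face_mx_corner (x : vtx -> 'rV[R]_6) v w :
  face_corner v w -> (x w <= face_mx x v)%MS.
Proof.
move=> vw; have := submx_refl (face_mx x v).
rewrite {1}/face_mx !col_mx_sub => /andP [/andP [? ?] /andP [? ?]].
by case: vw => [|[|[|]]] ->.
Qed.

Lemma face_cr_umbilic (u : vtx -> 'M[R]_(2,6))
    (r x : vtx -> 'rV[R]_6) (n p : 'rV[R]_6) v :
  n != 0 -> lie p p = -1 ->
  (forall w, face_corner v w -> umbilic_vertex (u w) n p (r w) (x w)) ->
  span_sig_21_or_12 (face_mx r v) -> (1 < \rank (face_mx x v))%N ->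
  face_cr r v = face_cr x v.
Proof.
move=> n0 pp UV sig rk.
have [c0 c1 c2 c3] : [/\ face_corner v v, face_corner v (sh1 v),
    face_corner v (sh1 (sh2 v)) & face_corner v (sh2 v)].
  by rewrite /face_corner; split; tauto.
have null w a b : face_corner v w -> (a <= u w)%MS -> (b <= u w)%MS -> lie a b = 0.
  by move=> /UV [[_ U0] _ _ _ _ _ _]; apply: lie_totally_null.
have nn : lie n n = 0 by apply: (null v) (uv_n (UV v c0)) (uv_n (UV v c0)).
have nr w : face_corner v w -> lie n (r w) = 0.
  by move=> vw; apply: (null w) (uv_n (UV w vw)) (uv_r (UV w vw)).
(* n is orthogonal to the non-degenerate face span of r *)
have rn w : face_corner v w -> ~~ (r w <= n)%MS.
  move=> vw; apply: orth_nondegenerate_notsub sig (uv_r0 (UV w vw)) _ _.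
    exact: face_mx_corner.
  by rewrite /face_mx; do 2!apply: orth_col; apply/orth_row/nr.
(* n is not a point sphere, since the face of x spans more than a line *)
have np : lie n p != 0.
  apply: contraTneq rk => np; rewrite -leqNgt.
  apply: leq_trans (mxrankS _) (rank_leq_row n).
  by rewrite /face_mx !col_mx_sub !(vertex_on_curvature_sphere (UV _ _)) ?rn.
rewrite /face_cr.
have [a0 [b0 [h0 ->]]] := vertex_span_nondeg (UV v c0) n0 (rn v c0) np.
have [a1 [b1 [h1 ->]]] := vertex_span_nondeg (UV _ c1) n0 (rn _ c1) np.
have [a2 [b2 [h2 ->]]] := vertex_span_nondeg (UV _ c2) n0 (rn _ c2) np.
have [a3 [b3 [h3 ->]]] := vertex_span_nondeg (UV _ c3) n0 (rn _ c3) np.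
rewrite /cr !lie_shift ?(nr _ c0, nr _ c1, nr _ c2, nr _ c3) //.
exact/esym/cr_scale.
Qed.

Lemma isothermic_transfer (V : vtx -> Prop) (x y : vtx -> 'rV[R]_6) :
  (forall v, V v -> in_light_cone (y v)) -> conjugate_net V y ->
  (forall v, is_face V v -> face_cr x v = face_cr y v) ->
  isothermic V x -> isothermic V y.
Proof.
move=> yL yC xy [_ [_ [a1 [a2 iso]]]]; split=> //; split=> //.
by exists a1, a2 => v Fv; rewrite -xy //; apply: iso.
Qed.

End LieForm.

Theorem mainTheorem18 (R : realFieldType) (V : vtx -> Prop)
  (r : vtx -> 'rV[R]_6) (u : vtx -> 'M[R]_(2,6))
  (p : 'rV[R]_6) (up : vtx -> 'rV[R]_6) :
  ribaucour V r ->
  totally_umbilic V u ->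
  envelops V u r ->
  lie p p = -1 ->
  point_sphere_map V p u up ->
  (forall v, is_face V v -> (1 < \rank (face_mx up v))%N) ->
  (forall v, is_face V v -> face_cr r v = face_cr up v) /\
  (isothermic V up <-> isothermic V r).
Proof.
move=> [rL [rC rSig]] [[uC _] [[n [n0 nU]] upCirc]] uEnv pp upP upRk.
have vertex w : V w -> (n <= u w)%MS -> umbilic_vertex (u w) n p (r w) (up w).
  move=> Vw nw; have [up0 [upU upp]] := upP w Vw.
  by split=> //; [exact: uC | exact: uEnv | case: (rL w Vw)].
have faceE v : is_face V v -> face_cr r v = face_cr up v.
  move=> Fv; apply: (face_cr_umbilic n0 pp) (rSig v Fv) (upRk v Fv).
  have [V0 [V1 [V2 V3]]] := Fv.
  have [nu0 nu1] := nU v (sh1 v) (conj V0 (conj V1 (or_introl erefl))).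
  have [nu3 nu2] := nU (sh2 v) (sh1 (sh2 v)) (conj V3 (conj V2 (or_introl erefl))).
  by move=> w [|[|[|]]] ->; apply: vertex.
have upL w : V w -> in_light_cone (up w).
  move=> Vw; have [up0 [upU _]] := upP w Vw; split=> //.
  by case: (uC w Vw) => _ U0; exact: (lie_totally_null U0 upU upU).
split=> //; split; apply: isothermic_transfer => //; last exact: upCirc pp upP.
by move=> v Fv; rewrite faceE.
Qed.
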